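(* Let $k\ge 1$, $c\ge 1$, $t\ge 1$ be integers. Assume that every $k$-tree admits a $c$-clique-colorable $t$-track layout. Then every $(k+1)$-tree admits a track layout on $t\cdot(2c+1)$ tracks, i.e. has track number at most $t(2c+1)$.
   Context: All graphs are finite, simple and undirected. A $k$-tree is defined recursively: the complete graph $K_k$ is a $k$-tree, and adding to a $k$-tree a new vertex adjacent to all vertices of some $k$-clique yields a $k$-tree. A $t$-track assignment of a graph $G$ is a partition of $V(G)$ into $t$ sets $V_1,\dots,V_t$ (tracks), each an independent set of $G$, together with a total order $<_i$ on each $V_i$. An X-crossing consists of two edges $(u,v)$ and $(x,y)$ with $u,x\in V_i$, $v,y\in V_j$ ($i\neq j$), $u<_i x$ and $y<_j v$. A $t$-track layout is a $t$-track assignment with no X-crossing; the track number $\mathrm{tn}(G)$ is the minimum $t$ for which $G$ has a $t$-track layout. Given a track layout of $G$, a clique $C_1$ precedes a clique $C_2$, written $C_1\prec C_2$, if for every track $V_i$ and all $u\in V_i\cap C_1$, $w\in V_i\cap C_2$ we have $u\le_i w$. A set $S$ of cliques is nicely ordered if its elements can be listed as $C_1,\dots,C_{|S|}$ with $C_i\prec C_j$ for all $i<j$. A track layout of $G$ is $c$-clique-colorable if the set of all maximal cliques of $G$ can be partitioned into $c$ nicely ordered subsets. *)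

From mathcomp Require Import all_boot.
Set Implicit Arguments. Unset Strict Implicit. Unset Printing Implicit Defensive.

(* Labelled k-trees on vertex set {0,...,n-1}, built by the recursive definition:
   K_k on {0..k-1}; then vertex n is added adjacent exactly to a k-clique C of
   the current graph. *)
Definition complete_rel (k : nat) : rel nat :=
  fun x y => [&& x < k, y < k & x != y].

Definition is_kclique_nat (k n : nat) (E : rel nat) (C : seq nat) : Prop :=
  [/\ uniq C, size C = k, all (fun x => x < n) C &
      forall x y, x \in C -> y \in C -> x != y -> E x y].

Definition add_vertex (n : nat) (E : rel nat) (C : seq nat) : rel nat :=
  fun x y => [|| E x y, (x == n) && (y \in C) | (y == n) && (x \in C)].

Inductive ktree (k : nat) : nat -> rel nat -> Prop :=
  | ktree_base : ktree k k (complete_rel k)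
  | ktree_step n E C : ktree k n E -> is_kclique_nat k n E C ->
      ktree k n.+1 (add_vertex n E C).

Definition is_ktree (k : nat) (T : finType) (e : rel T) : Prop :=
  exists n (E : rel nat), ktree k n E /\
    exists f : T -> 'I_n, bijective f /\ forall x y, e x y = E (f x) (f y).

(* tr x = track of x (among t tracks); the total order on each track is given
   by the positions pos, injective on each track. *)
Definition track_layout (T : finType) (e : rel T) (t : nat)
    (tr : T -> 'I_t) (pos : T -> nat) : Prop :=
  [/\
      forall x y, e x y -> tr x != tr y,
      forall x y, tr x = tr y -> pos x = pos y -> x = y &
      forall u v x y, e u v -> e x y -> tr u = tr x -> tr v = tr y ->
        tr u != tr v -> pos u < pos x -> pos y < pos v -> False].

Definition has_track_layout (T : finType) (e : rel T) (t : nat) : Prop :=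
  exists (tr : T -> 'I_t) (pos : T -> nat), track_layout e tr pos.

Definition is_clique (T : finType) (e : rel T) (A : {set T}) : Prop :=
  forall x y, x \in A -> y \in A -> x != y -> e x y.

Definition is_max_clique (T : finType) (e : rel T) (A : {set T}) : Prop :=
  is_clique e A /\ forall B : {set T}, is_clique e B -> A \subset B -> B = A.

Definition precedes (T : finType) (t : nat) (tr : T -> 'I_t) (pos : T -> nat)
    (C1 C2 : {set T}) : Prop :=
  forall u w, u \in C1 -> w \in C2 -> tr u = tr w -> pos u <= pos w.

Definition nicely_ordered (T : finType) (t : nat) (tr : T -> 'I_t)
    (pos : T -> nat) (S : {set {set T}}) : Prop :=
  exists s : seq {set T}, [/\ uniq s, forall C, (C \in s) = (C \in S) &
    forall i j, i < j < size s -> precedes tr pos (nth set0 s i) (nth set0 s j)].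

(* The set of maximal cliques is partitioned into c nicely ordered classes
   (classes are allowed to be empty). *)
Definition clique_colorable (T : finType) (e : rel T) (t : nat)
    (tr : T -> 'I_t) (pos : T -> nat) (c : nat) : Prop :=
  exists col : {set T} -> 'I_c,
    forall i : 'I_c,
      forall S : {set {set T}},
        (forall C, C \in S <-> (is_max_clique e C /\ col C = i)) ->
        nicely_ordered tr pos S.

From mathcomp Require Import all_boot zify.
Set Implicit Arguments. Unset Strict Implicit. Unset Printing Implicit Defensive.

(* Layer the (k+1)-tree G along its construction: vertex 0 forms layer 0 and each
   later vertex goes one layer below the top layer met by its attachment clique.
   Each layer splits into parts, and every part X is attached to a clique of the
   previous layer, its shadow, lying in the parent part. All edges inside layers
   fit in a single k-tree H, which has a c-clique-colorable t-track layout.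
   Choose for each part X a maximal clique M X of H containing its shadow, of
   colour gamma X < c, and give X the level lvl X = lvl (parent X) + gamma X + 1.
   An edge of G changes the level by at most c, so putting v on track
   (track of v in H, lvl v mod 2c+1) separates the ends of every edge and forces
   two crossing edges to have equal levels at both ends. Each track is ordered
   by level, layer, the ancestry of the part of v (encoded through the positions
   of the cliques M in their colour classes) and finally by the order in H.
   Edges inside a layer then cannot cross since H's layout has no X-crossing;
   edges between consecutive layers cannot cross since the colour class of the
   cliques M is nicely ordered. *)

Lemma add_vertexP n (E : rel nat) (C : seq nat) x y : add_vertex n E C x y ->
  [\/ E x y, x = n /\ y \in C | y = n /\ x \in C].
Proof.
by case/or3P=> [|/andP[/eqP-> ?]|/andP[/eqP-> ?]]; [constructor 1|constructor 2|constructor 3].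
Qed.

Lemma add_vertex_sub n (E : rel nat) (C : seq nat) x y : E x y -> add_vertex n E C x y.
Proof. by rewrite /add_vertex => ->. Qed.

Lemma ktree_edge_lt k n E : ktree k n E -> forall x y, E x y -> x < n /\ y < n.
Proof.
elim=> [|m E' C _ IH [_ _ /allP aC _]] x y; first by case/and3P.
case/add_vertexP=> [/IH|[-> /aC]|[-> /aC]] /=; lia.
Qed.

Lemma ktree_sym k n E : ktree k n E -> symmetric E.
Proof.
elim=> [|m E' C _ IH _] x y /=; first by rewrite /complete_rel eq_sym andbCA.
by rewrite /add_vertex IH [X in _ || X]orbC.
Qed.

Lemma complete_kclique k : is_kclique_nat k k (complete_rel k) (iota 0 k).
Proof.
split; [exact: iota_uniq|exact: size_iota|by apply/allP=> x; rewrite mem_iota|].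
by move=> x y; rewrite !mem_iota /complete_rel => hx hy ->; rewrite andbT; lia.
Qed.

Lemma add_vertex_clique_extend k n E D Q :
  is_kclique_nat k n E D -> n \in Q -> uniq Q -> size Q <= k ->
  (forall x y, x \in Q -> y \in Q -> x != y -> add_vertex n E D x y) ->
  (forall x y, E x y -> x < n /\ y < n) ->
  exists2 D', is_kclique_nat k n.+1 (add_vertex n E D) D' & {subset Q <= D'}.
Proof.
move=> [uD sD /allP aD cD] nQ uQ sQ cQ bnd.
have QD : {subset rem n Q <= D}.
  move=> y; rewrite (mem_rem_uniq _ uQ) => /andP[/= yn yQ].
  have := cQ n y nQ yQ; rewrite eq_sym yn => /(_ isT) /add_vertexP[/bnd|[]|[]];
    rewrite ?eqxx //.
  - lia.
  - by move=> yn'; rewrite yn' eqxx in yn.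
have [z zD zQ] : exists2 z, z \in D & z \notin Q.
  apply/hasP; rewrite -[has _ _]negbK -all_predC; apply/negP=> /allP hall.
  have : size D <= size (rem n Q).
    apply: uniq_leq_size => // z zD; rewrite (mem_rem_uniq _ uQ) inE.
    by rewrite (negbNE (hall z zD)) andbT; have := aD z zD; lia.
  have Q0 : 0 < size Q by case: (Q) nQ.
  by rewrite size_rem // sD -subn1; lia.
exists (n :: rem z D).
  split.
  - by rewrite /= rem_uniq // andbT; apply/negP=> /mem_rem /aD; lia.
  - by rewrite /= size_rem // -sD; case: (D) zD.
  - by rewrite /= ltnSn; apply/allP=> x /mem_rem /aD; lia.
  - move=> x y; rewrite !inE => /orP[/eqP->|/mem_rem hx] /orP[/eqP->|/mem_rem hy];
      rewrite ?eqxx // => hxy.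
    + by rewrite /add_vertex eqxx hy orbT.
    + by rewrite /add_vertex eqxx hx !orbT.
    + exact/add_vertex_sub/cD.
move=> x xQ; rewrite inE; case: eqP => //= /eqP xn.
rewrite (mem_rem_uniq _ uD) inE; apply/andP; split.
  by apply: contraNneq zQ => <-.
by apply: QD; rewrite (mem_rem_uniq _ uQ) inE xn.
Qed.

Lemma ktree_clique_extend k n E Q : ktree k n E -> uniq Q -> size Q <= k ->
  all (fun x => x < n) Q -> (forall x y, x \in Q -> y \in Q -> x != y -> E x y) ->
  exists2 D, is_kclique_nat k n E D & {subset Q <= D}.
Proof.
move=> kt; elim: kt Q => [|m E' D0 kt IH kD0] Q uQ sQ /allP aQ cQ.
  by exists (iota 0 k); [exact: complete_kclique|move=> x /aQ; rewrite mem_iota].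
have bnd := ktree_edge_lt kt.
have [mQ|mQ] := boolP (m \in Q); first exact: add_vertex_clique_extend.
have aQ' : all (fun x => x < m) Q.
  by apply/allP=> x xQ; have := aQ x xQ; rewrite ltnS leq_eqVlt; case: eqP xQ mQ => // -> ->.
have [|D kD sub] := IH Q uQ sQ aQ'.
  move=> x y xQ yQ /(cQ x y xQ yQ) /add_vertexP[//|[]|[]] eq; subst;
  by have := allP aQ' _ xQ; have := allP aQ' _ yQ; lia.
exists D => //; case: kD => uD sD aD cD; split=> //.
  by apply/allP=> x /(allP aD); lia.
by move=> x y xD yD xy; apply/add_vertex_sub/cD.
Qed.

(* [comp x] names (by a vertex) the part of x's layer containing x; [shadow X]
   is the clique of the previous layer to which part X is attached and
   [parent X] the part containing it; H is a k-tree containing every edge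
   inside a layer. *)
Record Layering (k n : nat) (E : rel nat) (layer comp parent : nat -> nat)
    (shadow : nat -> seq nat) (H : rel nat) : Prop := {
  layering_host : ktree k n H;
  layering_edge x y : E x y ->
    [\/ layer x = layer y, layer y = (layer x).+1 | layer x = (layer y).+1];
  layering_flat x y : E x y -> layer x = layer y -> H x y /\ comp x = comp y;
  layering_shadow_edge x y : E x y -> layer y = (layer x).+1 -> x \in shadow (comp y);
  layering_shadow y z : y < n -> z \in shadow (comp y) ->
    [/\ z < n, comp z = parent (comp y) & (layer z).+1 = layer y];
  layering_shadow_clique y z1 z2 : y < n -> z1 \in shadow (comp y) ->
    z2 \in shadow (comp y) -> z1 != z2 -> E z1 z2;
  layering_comp_lt x : x < n -> comp x < n }.

(* Vertex 0 is layer 0; the other k vertices form part 1 of layer 1, with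
   shadow [:: 0]. *)
Lemma layering_base k :
  Layering k k.+1 (complete_rel k.+1) [eta (fun=> 1) with 0 |-> 0]
    [eta (fun=> 1) with 0 |-> 0] (fun=> 0) [eta (fun=> [::]) with 1 |-> [:: 0]]
    (add_vertex k (complete_rel k) (iota 0 k)).
Proof.
split=> /=.
- exact/ktree_step/complete_kclique/ktree_base.
- move=> x y _; case: (x == 0); case: (y == 0);
    by [constructor 1|constructor 2|constructor 3|constructor 1].
- move=> x y /and3P[hx hy hxy]; rewrite /add_vertex /complete_rel !mem_iota.
  by case: eqP; case: eqP => //= *; split=> //; lia.
- by move=> x y _; case: eqP => //= _; case: eqP => [->|].
- by move=> y z _; case: (eqVneq y 0) => //= _; rewrite inE => /eqP->.
- by move=> y z1 z2 _; case: (eqVneq y 0) => //= _; rewrite !inE => /eqP-> /eqP->; rewrite eqxx.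
- by move=> x; case: eqP => //; lia.
Qed.

(* The new vertex n goes to layer m.+1, where m is the lowest layer met by its
   clique C; it joins a part of layer m.+1 met by C, or else starts a part. *)
Section LayeringStep.
Variables (k n : nat) (E : rel nat) (C : seq nat).
Variables (layer comp parent : nat -> nat) (shadow : nat -> seq nat) (H : rel nat).
Hypothesis kt : ktree k.+1 n E.
Hypothesis kC : is_kclique_nat k.+1 n E C.
Hypothesis L : Layering k n E layer comp parent shadow H.
Variable m : nat.
Hypothesis layer_C : forall x, x \in C -> layer x = m \/ layer x = m.+1.

Let C_lt x : x \in C -> x < n.
Proof. by case: kC => _ _ /allP + _; apply. Qed.

Let C_clique x y : x \in C -> y \in C -> x != y -> E x y.
Proof. by case: kC => _ _ _; apply. Qed.

Let E_new x y : E x y -> (x == n) = false /\ (y == n) = false.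
Proof. by move/(ktree_edge_lt kt)=> [hx hy]; rewrite !ltn_eqF. Qed.

Let new_lt x : x < n.+1 -> x = n \/ x < n.
Proof. by rewrite ltnS leq_eqVlt => /orP[/eqP|]; [left|right]. Qed.

Lemma layer_above_clique x0 : x0 \in C -> layer x0 = m ->
  exists2 D, is_kclique_nat k n H D & {in C, forall x, layer x = m.+1 -> x \in D}.
Proof.
move=> x0C lx0; have [uC sC aC _] := kC.
set Cup := [seq x <- C | layer x == m.+1].
have memCup x : (x \in Cup) = (x \in C) && (layer x == m.+1) by rewrite mem_filter andbC.
have sCup : size Cup <= k.
  have := count_predC (fun x => layer x == m.+1) C.
  have : has (predC (fun x => layer x == m.+1)) C.
    by apply/hasP; exists x0; rewrite //= lx0 (ltn_eqF (ltnSn m)).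
  by rewrite has_count size_filter sC; lia.
have [D kD CD] : exists2 D, is_kclique_nat k n H D & {subset Cup <= D}.
  apply: (ktree_clique_extend (layering_host L) (filter_uniq _ uC) sCup).
    by apply/allP=> x /[!memCup]/andP[/(allP aC)].
  move=> x y /[!memCup]/andP[xC /eqP xm] /andP[yC /eqP ym] xy.
  by apply: (proj1 (layering_flat L (C_clique xC yC xy) _)); rewrite xm ym.
by exists D => // x xC xm; apply: CD; rewrite memCup xC xm eqxx.
Qed.

Lemma layering_new_part x0 D : x0 \in C -> (forall x, x \in C -> layer x = m) ->
  is_kclique_nat k n H D ->
  Layering k n.+1 (add_vertex n E C) [eta layer with n |-> m.+1]
    [eta comp with n |-> n] [eta parent with n |-> comp x0] [eta shadow with n |-> C]
    (add_vertex n H D).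
Proof.
move=> x0C layer_m kD.
have [kH Ledge Lflat Lsh_edge Lsh Lsh_clique Lcomp] := L.
have comp_C x : x \in C -> comp x = comp x0.
  move=> xC; have [->//|xx0] := eqVneq x x0.
  by apply: (proj2 (Lflat x x0 (C_clique xC x0C xx0) _)); rewrite !layer_m.
have comp_new x : x < n -> (comp x == n) = false.
  by move=> hx; rewrite ltn_eqF // Lcomp.
split=> /=.
- exact: ktree_step.
- move=> x y /add_vertexP[e|[-> yC]|[-> xC]].
  + by have [-> ->] := E_new e; apply: Ledge.
  + by rewrite eqxx (ltn_eqF (C_lt yC)) layer_m //; constructor 3.
  + by rewrite eqxx (ltn_eqF (C_lt xC)) layer_m //; constructor 2.
- move=> x y /add_vertexP[e|[-> yC]|[-> xC]].
  + have [-> ->] := E_new e => /(Lflat _ _ e) [h1 h2].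
    by split=> //; apply: add_vertex_sub.
  + by rewrite eqxx (ltn_eqF (C_lt yC)) layer_m //; lia.
  + by rewrite eqxx (ltn_eqF (C_lt xC)) layer_m //; lia.
- move=> x y /add_vertexP[e|[-> yC]|[-> xC]].
  + have [-> ->] := E_new e => /(Lsh_edge _ _ e).
    by have [_ hy] := ktree_edge_lt kt e; rewrite comp_new.
  + by rewrite eqxx (ltn_eqF (C_lt yC)) layer_m //; lia.
  + by rewrite !eqxx.
- move=> y z /new_lt[->|hy].
  + rewrite !eqxx => zC; rewrite (ltn_eqF (C_lt zC)) comp_C // layer_m //.
    by split=> //; apply/ltnW/C_lt.
  + rewrite (ltn_eqF hy) comp_new // => /(Lsh _ _ hy) [hz h1 h2].
    by rewrite (ltn_eqF hz); split=> //; apply: ltnW.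
- move=> y z1 z2 /new_lt[->|hy].
  + by rewrite !eqxx => h1 h2 h3; apply/add_vertex_sub/C_clique.
  + by rewrite (ltn_eqF hy) comp_new // => h1 h2 h3; apply/add_vertex_sub/(Lsh_clique y).
- move=> x /new_lt[->|hx]; first by rewrite eqxx.
  by rewrite (ltn_eqF hx); apply/ltnW/Lcomp.
Qed.

Lemma layering_join_part w D : w \in C -> layer w = m.+1 -> is_kclique_nat k n H D ->
  {in C, forall x, layer x = m.+1 -> x \in D} ->
  Layering k n.+1 (add_vertex n E C) [eta layer with n |-> m.+1]
    [eta comp with n |-> comp w] parent shadow (add_vertex n H D).
Proof.
move=> wC layer_w kD CD.
have [kH Ledge Lflat Lsh_edge Lsh Lsh_clique Lcomp] := L.
have comp_C x : x \in C -> layer x = m.+1 -> comp x = comp w.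
  move=> xC hl; have [->//|xw] := eqVneq x w.
  by apply: (proj2 (Lflat x w (C_clique xC wC xw) _)); rewrite hl.
split=> /=.
- exact: ktree_step.
- move=> x y /add_vertexP[e|[-> yC]|[-> xC]].
  + by have [-> ->] := E_new e; apply: Ledge.
  + rewrite eqxx (ltn_eqF (C_lt yC)).
    by case: (layer_C yC) => ->; [constructor 3|constructor 1].
  + rewrite eqxx (ltn_eqF (C_lt xC)).
    by case: (layer_C xC) => ->; [constructor 2|constructor 1].
- move=> x y /add_vertexP[e|[-> yC]|[-> xC]].
  + have [-> ->] := E_new e => /(Lflat _ _ e) [h1 h2].
    by split=> //; apply: add_vertex_sub.
  + rewrite eqxx (ltn_eqF (C_lt yC)) => hl.
    by rewrite /add_vertex eqxx (CD y) ?comp_C //=; split; rewrite ?orbT.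
  + rewrite eqxx (ltn_eqF (C_lt xC)) => hl.
    by rewrite /add_vertex eqxx (CD x) ?comp_C //=; split; rewrite ?orbT.
- move=> x y /add_vertexP[e|[-> yC]|[-> xC]].
  + by have [-> ->] := E_new e => /(Lsh_edge _ _ e).
  + by rewrite eqxx (ltn_eqF (C_lt yC)); case: (layer_C yC) => ->; lia.
  + rewrite !eqxx (ltn_eqF (C_lt xC)) => hl.
    have xw : x != w by apply: contra_eq_neq hl => ->; rewrite layer_w; lia.
    by apply: (Lsh_edge _ _ (C_clique xC wC xw)); rewrite layer_w.
- move=> y z /new_lt[->|hy].
  + rewrite !eqxx => /(Lsh _ _ (C_lt wC)) [hz h1 h2].
    by rewrite (ltn_eqF hz) h1 h2 layer_w; split=> //; apply: ltnW.
  + rewrite (ltn_eqF hy) => /(Lsh _ _ hy) [hz h1 h2].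
    by rewrite (ltn_eqF hz); split=> //; apply: ltnW.
- move=> y z1 z2 /new_lt[->|hy].
  + by rewrite !eqxx => h1 h2 h3; apply/add_vertex_sub/(Lsh_clique w _ _ (C_lt wC)).
  + by rewrite (ltn_eqF hy) => h1 h2 h3; apply/add_vertex_sub/(Lsh_clique y).
- move=> x /new_lt[->|hx]; rewrite ?eqxx ?(ltn_eqF hx); apply/ltnW/Lcomp => //.
  exact: C_lt wC.
Qed.

End LayeringStep.

Lemma seq_argmin (T : eqType) (f : T -> nat) (s : seq T) : s != [::] ->
  exists2 x0, x0 \in s & {in s, forall x, f x0 <= f x}.
Proof.
elim: s => // a [|b s] IH _; first by exists a; rewrite ?inE // => x /[!inE]/eqP->.
have [x0 x0s x0min] := IH isT.
have [le|lt] := leqP (f a) (f x0).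
  exists a; first exact: mem_head.
  by move=> x /[!inE]/orP[/eqP->//|/x0min]; apply: leq_trans.
exists x0; first by rewrite inE x0s orbT.
by move=> x /[!inE]/orP[/eqP->|/x0min//]; apply: ltnW.
Qed.

Lemma layering_step k n E C layer comp parent shadow H :
  ktree k.+1 n E -> is_kclique_nat k.+1 n E C ->
  Layering k n E layer comp parent shadow H ->
  exists layer' comp' parent' shadow' H',
    Layering k n.+1 (add_vertex n E C) layer' comp' parent' shadow' H'.
Proof.
move=> kt kC L; have [_ sC _ cC] := kC.
have Cne : C != [::] by case: (C) sC.
have [x0 x0C x0min] := seq_argmin layer Cne.
have layer_C x : x \in C -> layer x = layer x0 \/ layer x = (layer x0).+1.
  move=> xC; have [->|xx0] := eqVneq x x0; first by left.
  have := cC x0 x x0C xC; rewrite eq_sym xx0 => /(_ isT) /(layering_edge L) e.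
  by have := x0min x xC; case: e; lia.
have [D kD CD] := layer_above_clique kC L x0C erefl.
exists [eta layer with n |-> (layer x0).+1].
have [/hasP[w wC /eqP lw]|/hasPn above] := boolP (has (fun x => layer x == (layer x0).+1) C).
  by do 4!eexists; exact: (layering_join_part kt kC L layer_C wC lw kD CD).
do 4!eexists; apply: (layering_new_part kt kC L x0C _ kD) => x xC.
by case: (layer_C x xC) (above x xC) => // ->; rewrite eqxx.
Qed.

Lemma layering k n E : ktree k.+1 n E ->
  exists layer comp parent shadow H, Layering k n E layer comp parent shadow H.
Proof.
elim=> [|m E' C kt [layer [comp [parent [shadow [H L]]]]] kC].
  by do 5!eexists; exact: layering_base.
exact: layering_step kt kC L.
Qed.

Definition cliqueb (T : finType) (e : rel T) (A : {set T}) :=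
  [forall x in A, forall y in A, (x != y) ==> e x y].

Lemma cliqueP (T : finType) (e : rel T) (A : {set T}) :
  reflect (is_clique e A) (cliqueb e A).
Proof.
apply: (iffP forall_inP) => [h x y xA yA xy|h x xA].
  by have /forall_inP/(_ y yA)/implyP := h x xA; apply.
by apply/forall_inP=> y yA; apply/implyP; apply: h.
Qed.

Definition max_cliqueb (T : finType) (e : rel T) (A : {set T}) :=
  cliqueb e A && [forall B, cliqueb e B ==> (A \subset B) ==> (B == A)].

Lemma max_cliqueP (T : finType) (e : rel T) (A : {set T}) :
  reflect (is_max_clique e A) (max_cliqueb e A).
Proof.
apply: (iffP andP) => [[/cliqueP cA /forallP mA]|[cA mA]]; split=> //.
- by move=> B /cliqueP cB AB; apply/eqP; have /implyP/(_ cB)/implyP := mA B; apply.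
- exact/cliqueP.
- by apply/forallP=> B; apply/implyP=> /cliqueP cB; apply/implyP=> /(mA B cB)->.
Qed.

Lemma max_clique_extend (T : finType) (e : rel T) (A : {set T}) :
  is_clique e A -> exists2 B, is_max_clique e B & A \subset B.
Proof.
move=> cA; pose P := [pred B : {set T} | cliqueb e B && (A \subset B)].
have PA : P A by rewrite inE subxx andbT; apply/cliqueP.
case: (arg_maxnP (fun B : {set T} => #|B|) PA) => B /andP[/cliqueP cB AB] Bmax.
exists B => //; split=> // B' cB' BB'.
apply/eqP; rewrite eq_sym eqEcard BB' /=.
by apply: Bmax; rewrite inE (subset_trans AB BB') andbT; apply/cliqueP.
Qed.

Lemma lex_ltn a b a' b' B : b < B ->
  a < a' \/ a = a' /\ b < b' -> a * B + b < a' * B + b'.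
Proof.
move=> bB [lt|[-> lt]]; last by rewrite ltn_add2l.
have : a.+1 * B <= a' * B by rewrite leq_mul2r lt orbT.
by rewrite mulSn; lia.
Qed.

Lemma lex_inj a b a' b' B : b < B -> b' < B ->
  a * B + b = a' * B + b' -> a = a' /\ b = b'.
Proof.
move=> bB b'B; case: (ltngtP a a') => [lt|lt|-> /addnI//].
- by have := @lex_ltn a b a' b' B bB (or_introl lt); lia.
- by have := @lex_ltn a' b' a b B b'B (or_introl lt); lia.
Qed.

Lemma lex_ltn_inv a b a' b' B : b < B -> b' < B ->
  a * B + b < a' * B + b' -> a < a' \/ a = a' /\ b < b'.
Proof.
move=> bB b'B lt; case: (ltngtP a a') => [|gt|eq]; [by left| |by right; subst; lia].
by have := @lex_ltn a' b' a b B b'B (or_introl gt); lia.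
Qed.

Lemma lex_leq_inv a b a' b' B : b < B -> b' < B ->
  a * B + b <= a' * B + b' -> a < a' \/ a = a' /\ b <= b'.
Proof.
move=> bB b'B; rewrite leq_eqVlt => /orP[/eqP/(lex_inj bB b'B)[-> ->]|]; first by right.
by case/(lex_ltn_inv bB b'B) => [|[]]; [left|right; split=> //; apply: ltnW].
Qed.

Lemma lex_bound a b A B : a < A -> b < B -> a * B + b < A * B.
Proof.
move=> aA bB; have : a.+1 * B <= A * B by rewrite leq_mul2r aA orbT.
by rewrite mulSn; lia.
Qed.

Lemma modn_eq_gap x y d : 0 < d -> x %% d = y %% d -> x < y -> x + d <= y.
Proof.
move=> d0 xy lt; have : d %| y - x by rewrite -eqn_mod_dvd ?xy // ltnW.
by move/dvdn_leq; rewrite subn_gt0 => /(_ lt); lia.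
Qed.

Definition rel_ord n (E : rel nat) : rel 'I_n := fun x y => E x y.
Arguments rel_ord : clear implicits.

Section LayoutFromLayering.
Variables (k c t n : nat) (E : rel nat) (layer comp parent : nat -> nat).
Variables (shadow : nat -> seq nat) (H : rel nat).
Hypothesis kt : ktree k.+1 n E.
Hypothesis L : Layering k n E layer comp parent shadow H.
Variables (tr : 'I_n -> 'I_t) (pos : 'I_n -> nat) (col : {set 'I_n} -> 'I_c).
Hypothesis layoutH : track_layout (rel_ord n H) tr pos.
Variable cls : 'I_c -> seq {set 'I_n}.
Hypothesis cls_mem : forall g C, C \in cls g <-> is_max_clique (rel_ord n H) C /\ col C = g.
Hypothesis cls_prec : forall g i j, i < j < size (cls g) ->
  precedes tr pos (nth set0 (cls g) i) (nth set0 (cls g) j).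
Variable M : nat -> {set 'I_n}.
Hypothesis M_max : forall X, is_max_clique (rel_ord n H) (M X).
Hypothesis M_shadow : forall a b : 'I_n, val a \in shadow (comp b) -> a \in M (comp b).

Definition colour X := col (M X).
Definition shift X : nat := (colour X).+1.
Definition class_index X := index (M X) (cls (colour X)).
(* Parts are ordered within a layer by their labels read along their
   ancestry, as a numeral in base [label_base]. *)
Definition label X := class_index X * n + X.
Definition label_base := (\max_(g : 'I_c) size (cls g)) * n.

Fixpoint level_of l X := if l is l'.+1 then level_of l' (parent X) + shift X else 0.
Fixpoint key_of l X := if l is l'.+1 then key_of l' (parent X) * label_base + label X else 0.

Definition level (v : nat) := level_of (layer v) (comp v).
Definition key (v : nat) := key_of (layer v) (comp v).

Definition key_base := (\max_(v : 'I_n) key v).+1.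
Definition pos_base := (\max_(v : 'I_n) pos v).+1.
Definition lk_base := (\max_(v : 'I_n) layer v).+1 * key_base.
Definition lk (v : 'I_n) := layer v * key_base + key v.

(* Position on a track: lexicographic in (level, layer, key, pos). *)
Definition place (v : 'I_n) := (level v * lk_base + lk v) * pos_base + pos v.

Lemma period_gt0 : 0 < 2 * c + 1. Proof. by rewrite addn1. Qed.

Definition track (v : 'I_n) : 'I_(t * (2 * c + 1)) :=
  Ordinal (lex_bound (ltn_ord (tr v)) (ltn_pmod (level v) period_gt0)).

Lemma M_in_class X : M X \in cls (colour X).
Proof. exact/cls_mem. Qed.

Lemma class_index_lt X : class_index X < \max_(g : 'I_c) size (cls g).
Proof.
apply: (leq_trans _ (leq_bigmax (colour X))).
by rewrite index_mem M_in_class.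
Qed.

Lemma comp_lt (v : 'I_n) : comp v < n.
Proof. exact: (layering_comp_lt L (ltn_ord v)). Qed.

Lemma label_lt (v : 'I_n) : label (comp v) < label_base.
Proof. exact: lex_bound (class_index_lt _) (comp_lt v). Qed.

Lemma shift_bound X : 0 < shift X <= c.
Proof. by rewrite /shift ltnS ltn_ord. Qed.

Definition child (p q : 'I_n) :=
  [/\ layer q = (layer p).+1, p \in M (comp q) & comp p = parent (comp q)].

Lemma child_level p q : child p q -> level q = level p + shift (comp q).
Proof. by case=> hl _ hc; rewrite /level hl /= hc. Qed.

Lemma child_key p q : child p q -> key q = key p * label_base + label (comp q).
Proof. by case=> hl _ hc; rewrite /key hl /= hc. Qed.

Lemma edge_cases (a b : 'I_n) : rel_ord n E a b ->
  [\/ [/\ layer a = layer b, comp a = comp b & rel_ord n H a b], child a b | child b a].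
Proof.
have down (x y : 'I_n) : E x y -> layer y = (layer x).+1 -> child x y.
  move=> exy hl; have sh := layering_shadow_edge L exy hl.
  by have [_ hp _] := layering_shadow L (ltn_ord y) sh; split=> //; apply: M_shadow.
rewrite /rel_ord => e; case: (layering_edge L e) => hl.
- by have [h1 h2] := layering_flat L e hl; constructor 1.
- by constructor 2; apply: down.
- by constructor 3; apply: down; rewrite // (ktree_sym kt).
Qed.

Lemma level_edge (a b : 'I_n) : rel_ord n E a b ->
  level a <= level b + c /\ level b <= level a + c.
Proof.
move=> e; have := shift_bound (comp a); have := shift_bound (comp b).
case: (edge_cases e) => [[h1 h2 _]|/child_level->|/child_level->];
  first rewrite /level h1 h2; lia.
Qed.

Lemma key_lt (v : 'I_n) : key v < key_base.
Proof. by rewrite ltnS; apply: (leq_bigmax v). Qed.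

Lemma lk_lt (v : 'I_n) : lk v < lk_base.
Proof. by apply: lex_bound (key_lt v); rewrite ltnS; apply: (leq_bigmax v). Qed.

Lemma pos_lt (v : 'I_n) : pos v < pos_base.
Proof. by rewrite ltnS; apply: (leq_bigmax v). Qed.

Lemma track_eq a b : track a = track b ->
  tr a = tr b /\ level a %% (2 * c + 1) = level b %% (2 * c + 1).
Proof.
move/(congr1 val) => /=.
by case/(lex_inj (ltn_pmod _ period_gt0) (ltn_pmod _ period_gt0)) => /ord_inj.
Qed.

Lemma place_lt a b : place a < place b -> level a < level b \/
  level a = level b /\ (lk a < lk b \/ lk a = lk b /\ pos a < pos b).
Proof.
case/(lex_ltn_inv (pos_lt a) (pos_lt b)) => [lt|[eq ltp]].
  case: (lex_leq_inv (lk_lt a) (lk_lt b) (ltnW lt)) => [|[e _]]; first by left.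
  by right; split=> //; left; case: (lex_ltn_inv (lk_lt a) (lk_lt b) lt) => [|[]]; lia.
by have [-> ->] := lex_inj (lk_lt a) (lk_lt b) eq; right; split=> //; right.
Qed.

Lemma class_precedes X Y (a b : 'I_n) : colour X = colour Y ->
  class_index X < class_index Y -> a \in M X -> b \in M Y -> tr a = tr b -> pos a <= pos b.
Proof.
move=> eXY lt aX bY eab.
have nthM Z : nth set0 (cls (colour Z)) (class_index Z) = M Z by rewrite nth_index ?M_in_class.
have jlt : class_index Y < size (cls (colour X)) by rewrite eXY index_mem M_in_class.
have := cls_prec (g := colour X) (i := class_index X) (j := class_index Y).
rewrite lt jlt nthM eXY nthM.
by move=> /(_ isT) /(_ a b aX bY eab).
Qed.

Lemma class_index_inj X Y : colour X = colour Y -> class_index X = class_index Y -> M X = M Y.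
Proof.
move=> eXY eidx; rewrite -[M X](nth_index set0 (M_in_class X)).
by rewrite -[M Y](nth_index set0 (M_in_class Y)) -/(class_index X) -/(class_index Y) eidx eXY.
Qed.

Lemma clique_track_inj X (a b : 'I_n) : a \in M X -> b \in M X -> tr a = tr b -> a = b.
Proof.
move=> aX bX eab; apply/eqP/negPn/negP => ab.
have [[cl _] [indep _ _]] := (M_max X, layoutH).
by have := indep a b (cl a b aX bX ab); rewrite eab eqxx.
Qed.

Lemma child_lk p1 p2 c1 c2 : child p1 c1 -> child p2 c2 -> lk p1 < lk p2 -> lk c1 < lk c2.
Proof.
move=> h1 h2 /(lex_ltn_inv (key_lt p1) (key_lt p2)) lt.
apply: lex_ltn (key_lt c1) _.
rewrite (child_key h1) (child_key h2); case: h1 h2 => -> _ _ [-> _ _].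
case: lt => [|[-> lt]]; [by left|right; split=> //].
by apply: lex_ltn (label_lt c1) _; left.
Qed.

Lemma child_no_cross p1 p2 c1 c2 : child p1 c1 -> child p2 c2 -> tr p1 = tr p2 ->
  level p1 = level p2 -> level c1 = level c2 -> place p1 < place p2 -> place c2 < place c1 ->
  False.
Proof.
move=> h1 h2 etr ep ec /place_lt hp /place_lt hc.
have eshift : shift (comp c1) = shift (comp c2).
  by move: ec; rewrite (child_level h1) (child_level h2) ep; lia.
have ecol : colour (comp c1) = colour (comp c2) by apply/ord_inj/succn_inj.
have lkc : lk c2 <= lk c1 by case: hc => [|[_ [|[]]]]; lia.
case: hp => [|[_ [/(child_lk h1 h2)|[elk ltpos]]]]; [lia|lia|].
have [el ek] := lex_inj (key_lt p1) (key_lt p2) elk.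
have hl : layer c1 = layer c2 by case: h1 h2 => -> _ _ [-> _ _]; rewrite el.
have : key c2 <= key c1.
  by move: lkc; rewrite /lk hl => /(lex_leq_inv (key_lt c2) (key_lt c1)) [|[]]; lia.
rewrite (child_key h1) (child_key h2) ek leq_add2l.
case: h1 h2 => _ pm1 _ [_ pm2 _].
case/(lex_leq_inv (comp_lt c2) (comp_lt c1)) => [lt|[eidx _]].
  by have := class_precedes (esym ecol) lt pm2 pm1 (esym etr); lia.
rewrite -(class_index_inj ecol (esym eidx)) in pm2.
by move: ltpos; rewrite (clique_track_inj pm1 pm2 etr) ltnn.
Qed.

Lemma flat_level (a b : 'I_n) : layer a = layer b -> comp a = comp b -> level a = level b.
Proof. by rewrite /level => -> ->. Qed.

Lemma place_lt_level a b : place a < place b -> level a <= level b.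
Proof. by case/place_lt => [/ltnW|[->]]. Qed.

Lemma crossing_levels u v x y : rel_ord n E u v -> rel_ord n E x y ->
  track u = track x -> track v = track y -> place u < place x -> place y < place v ->
  level u = level x /\ level y = level v.
Proof.
move=> euv exy /track_eq[_ mux] /track_eq[_ mvy] /place_lt_level lux /place_lt_level lyv.
have [[s1 s2] [s3 s4]] := (level_edge euv, level_edge exy).
split; apply/eqP; rewrite eqn_leq ?lux ?lyv leqNgt; apply/negP => lt.
- by have := modn_eq_gap period_gt0 mux lt; move: s2 s3 lyv; clear; lia.
- by have := modn_eq_gap period_gt0 (esym mvy) lt; move: s2 s3 lux; clear; lia.
Qed.

Lemma child_level_gt p q : child p q -> level p < level q.
Proof. by move/child_level->; have := shift_bound (comp q); lia. Qed.

Lemma no_crossing u v x y : rel_ord n E u v -> rel_ord n E x y ->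
  track u = track x -> track v = track y -> place u < place x -> place y < place v -> False.
Proof.
move=> euv exy tux tvy hux hyv.
have [e1 e2] := crossing_levels euv exy tux tvy hux hyv.
have [[truy _] [trvy _]] := (track_eq tux, track_eq tvy).
case: (edge_cases euv) => [[l1 c1 h1]|ch1|ch1]; case: (edge_cases exy) => [[l2 c2 h2]|ch2|ch2].
- have [lkuv lkxy] : lk u = lk v /\ lk x = lk y by rewrite /lk /key l1 c1 l2 c2.
  move: (place_lt hux) (place_lt hyv); rewrite lkuv lkxy e1 e2 => pux pyv.
  have [indep _ cross] := layoutH.
  apply: cross h1 h2 truy trvy (indep _ _ h1) _ _; move: pux pyv; clear; lia.
- by move: (flat_level l1 c1) (child_level_gt ch2) e1 e2; clear; lia.
- by move: (flat_level l1 c1) (child_level_gt ch2) e1 e2; clear; lia.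
- by move: (flat_level l2 c2) (child_level_gt ch1) e1 e2; clear; lia.
- exact: child_no_cross ch1 ch2 truy e1 (esym e2) hux hyv.
- by move: (child_level_gt ch1) (child_level_gt ch2) e1 e2; clear; lia.
- by move: (flat_level l2 c2) (child_level_gt ch1) e1 e2; clear; lia.
- by move: (child_level_gt ch1) (child_level_gt ch2) e1 e2; clear; lia.
- exact: child_no_cross ch2 ch1 (esym trvy) e2 (esym e1) hyv hux.
Qed.

Lemma layering_track_layout : track_layout (rel_ord n E) track place.
Proof.
split.
- move=> x y exy; apply/eqP => /track_eq [etr emod].
  have [indep _ _] := layoutH.
  case: (edge_cases exy) => [[_ _ h]|ch|ch]; first by move: (indep _ _ h); rewrite etr eqxx.
  + have := modn_eq_gap period_gt0 emod (child_level_gt ch).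
    by move: (shift_bound (comp y)); rewrite (child_level ch); clear; lia.
  + have := modn_eq_gap period_gt0 (esym emod) (child_level_gt ch).
    by move: (shift_bound (comp x)); rewrite (child_level ch); clear; lia.
- move=> x y /track_eq [etr _] /(lex_inj (pos_lt x) (pos_lt y)) [_ epos].
  by have [_ inj _] := layoutH; apply: inj.
- by move=> u v x y euv exy tux tvy _; apply: no_crossing.
Qed.
End LayoutFromLayering.

Lemma ktree_rel_ord k n E : ktree k n E -> is_ktree k (rel_ord n E).
Proof. by move=> kt; exists n, E; split=> //; exists id; split=> //; exists id. Qed.

Lemma has_track_layout_transfer (T : finType) (e : rel T) n (E : rel nat)
    (f : T -> 'I_n) t :
  bijective f -> (forall x y, e x y = E (f x) (f y)) ->
  has_track_layout (rel_ord n E) t -> has_track_layout e t.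
Proof.
move=> fbij fe [tr [pos [indep inj cross]]].
exists (tr \o f), (pos \o f); split=> [x y|x y etr epos|u v x y] /=.
- by rewrite fe; apply: indep.
- by apply: (bij_inj fbij); apply: inj.
- by rewrite !fe; apply: cross.
Qed.

Lemma colour_classes (T : finType) (e : rel T) t (tr : T -> 'I_t) pos c :
  clique_colorable e tr pos c ->
  exists col : {set T} -> 'I_c, exists cls : 'I_c -> seq {set T},
    (forall g C, C \in cls g <-> is_max_clique e C /\ col C = g) /\
    (forall g i j, i < j < size (cls g) ->
       precedes tr pos (nth set0 (cls g) i) (nth set0 (cls g) j)).
Proof.
case=> col hcol; exists col.
have classP g C : C \in [set C | max_cliqueb e C & col C == g] <->
    is_max_clique e C /\ col C = g.
  rewrite inE; split=> [/andP[/max_cliqueP ? /eqP ?]|[/max_cliqueP ? /eqP ?]];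
    by [split|apply/andP].
have /fin_all_exists[cls clsP] : forall g, exists s : seq {set T},
    (forall C, (C \in s) = (C \in [set C | max_cliqueb e C & col C == g])) /\
    forall i j, i < j < size s -> precedes tr pos (nth set0 s i) (nth set0 s j).
  move=> g; have [|s [_ memS precS]] := hcol g [set C | max_cliqueb e C & col C == g].
    by move=> C; rewrite classP.
  by exists s.
exists cls; split=> [g C|g]; last by case: (clsP g).
by case: (clsP g) => -> _; apply: classP.
Qed.

Lemma shadow_cliques k n E layer comp parent shadow H :
  Layering k n E layer comp parent shadow H ->
  exists M : nat -> {set 'I_n}, (forall X, is_max_clique (rel_ord n H) (M X)) /\
    forall a b : 'I_n, val a \in shadow (comp b) -> a \in M (comp b).
Proof.
move=> L.
pose P X (B : {set 'I_n}) := max_cliqueb (rel_ord n H) B &&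
  [forall a : 'I_n, forall b : 'I_n, (comp b == X) && (val a \in shadow X) ==> (a \in B)].
have hP X : exists B, P X B.
  have [/existsP[b /eqP <-]|none] := boolP [exists b : 'I_n, comp b == X].
    have cl : is_clique (rel_ord n H) [set a : 'I_n | val a \in shadow (comp b)].
      move=> a1 a2; rewrite !inE => h1 h2 h12.
      have [_ _ l1] := layering_shadow L (ltn_ord b) h1.
      have [_ _ l2] := layering_shadow L (ltn_ord b) h2.
      have e12 := layering_shadow_clique L (ltn_ord b) h1 h2 h12.
      by have [] := layering_flat L e12 (succn_inj (etrans l1 (esym l2))).
    have [B /max_cliqueP mB sB] := max_clique_extend cl.
    exists B; rewrite /P mB; apply/forallP=> a; apply/forallP=> b'.
    by apply/implyP=> /andP[_ ha]; apply: (subsetP sB); rewrite inE.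
  have c0 : is_clique (rel_ord n H) set0 by move=> ? ?; rewrite inE.
  have [B /max_cliqueP mB _] := max_clique_extend c0.
  exists B; rewrite /P mB; apply/forallP=> a; apply/forallP=> b.
  by apply/implyP=> /andP[eb _]; case/existsP: none; exists b.
exists (fun X => xchoose (hP X)); split=> [X|a b ab].
  by case/andP: (xchooseP (hP X)) => /max_cliqueP.
case/andP: (xchooseP (hP (comp b))) => _ /forallP/(_ a)/forallP/(_ b)/implyP.
by apply; rewrite eqxx.
Qed.

Theorem lemma5 (k c t : nat) (hk : 1 <= k) (hc : 1 <= c) (ht : 1 <= t) :
  (forall (T : finType) (e : rel T), is_ktree k e ->
     exists (tr : T -> 'I_t) (pos : T -> nat),
       track_layout e tr pos /\ clique_colorable e tr pos c) ->
  forall (T : finType) (e : rel T), is_ktree k.+1 e ->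
    has_track_layout e (t * (2 * c + 1)).
Proof.
move=> colourable_layout T e [n [E [kt [f [fbij fe]]]]].
apply: (has_track_layout_transfer fbij fe).
have [layer [comp [parent [shadow [H L]]]]] := layering kt.
have [tr [pos [layoutH colH]]] := colourable_layout _ _ (ktree_rel_ord (layering_host L)).
have [col [cls [cls_mem cls_prec]]] := colour_classes colH.
have [M [M_max M_shadow]] := shadow_cliques L.
have := layering_track_layout kt L layoutH cls_mem cls_prec M_max M_shadow.
by exists (track layer comp parent tr col M), (place layer comp parent pos col cls M).
Qed.
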